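(* Assume (H). For any finite sequence of types ${\bf x}=(x_1,\dots,x_r)\in[K]^r$ and any non-negative measurable functions $G_1,G_2$, $$E^{\bf x}\Big[\sum_{v\in F}G_1(v,[F]_v)\,G_2(F_v)\Big]=\sum_{j=1}^rb_{x_j}\sum_{h\ge0}\widehat E^{{\bf x},j,h}\Big[\frac{G_1(V,F)\,E^{(e(V))}[G_2(T)]}{b_{e(V)}}\Big].$$
   Context: Let $K\ge1$ be an integer and $[K]=\{1,\dots,K\}$. ${\boldsymbol\zeta}=(\zeta^{(i)})$ is a family of probability measures on the set $\mathcal W_K$ of finite (possibly empty) $[K]$-valued sequences; $p({\bf w})\in\mathbb Z_+^K$ counts entries of each type and $\mu^{(i)}=p_*\zeta^{(i)}$. Set $m_{ij}=\sum z_j\mu^{(i)}(\{{\bf z}\})$, $M=(m_{ij})$ and $Q^{(i)}_{jk}=\partial^2\varphi^{(i)}/\partial s_j\partial s_k({\bf 1})$, with $\varphi^{(i)}({\bf s})=\sum\mu^{(i)}(\{{\bf z}\})\prod s_l^{z_l}$. Hypothesis (H) means all of the following: $M$ is irreducible; some $\mu^{(i)}$ charges $\{\sum z_l\ne1\}$; the spectral radius of $M$ is $1$; and all $Q^{(i)}_{jk}<\infty$. Then ${\bf b}$ is the right $1$-eigenvector of $M$ (positive entries) normalized by $\sum a_ib_i=1$, where ${\bf a}$ is the left $1$-eigenvector with $\sum a_i=1$. Trees and forests. Trees are finite subsets $t$ of the set $\mathcal U$ of finite words over $\mathbb N$ containing $\varnothing$, such that $ui\in t$ implies $u\in t$ and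 $uj\in t$ for $j\le i$, with types $e(\cdot)\in[K]$ and ${\bf w}_t(u)=(e(u1),\dots,e(uc_t(u)))$. A forest is $f=\bigcup_kk\,t_{(k)}$. For $u\in f$: - $f_u=\{v:uv\in f\}$ is the fringe subtree at $u$, with inherited types; - $[f]_u=\{u\}\cup(f\setminus uf_u)$ is the forest pruned at $u$, with restricted types. Galton–Watson laws. $P^{(i)}(T=t)=\prod_u\zeta^{(e(u))}({\bf w}_t(u))$ for root type $i$. $P^{\bf x}$ is the law of $F=\bigcup_{k=1}^rk\,T_k$ with independent $T_k\sim P^{(x_k)}$. $E^{(i)},E^{\bf x}$ denote the corresponding expectations. Size-biased tree. Let $\widehat\zeta^{(i)}({\bf w})=\frac{p({\bf w})\cdot{\bf b}}{b_i}\zeta^{(i)}({\bf w})$, a probability measure on $\mathcal W_K$. Build an infinite random $K$-type tree with a spine $V_0=\varnothing,V_1,V_2,\dots$, where $e(V_0)=i$: - a spine vertex $V_n$ of type $j$ has children types ${\bf w}$ drawn from $\widehat\zeta^{(j)}$; given ${\bf w}$, an index $l$ is chosen with probability $b_{w_l}/(p({\bf w})\cdot{\bf b})$, and $V_{n+1}=V_nl$; - every non-spine vertex of type $j$ has children types drawn from $\zeta^{(j)}$; - all choices are independent. $\widehat P^{(i),h}$ is the law of the pair $([\,\text{tree}\,]_{V_h},V_h)$, a finite tree with a distinguished vertex at height $h$. For ${\bf x}=(x_1,\dots,x_r)$, $1\le j\le r$ and $h\ge0$, $\widehat P^{{\bf x},j,h}$ is the law of the pointed forest $(F,V)$ where: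 - the components $F_l$, $l\ne j$, and $F_j$ are independent; - $F_l\sim P^{(x_l)}$ for $l\neq j$; - $(F_j,V')\sim\widehat P^{(x_j),h}$, and $V=jV'$. $\widehat E^{{\bf x},j,h}$ is the corresponding expectation, and $T$ denotes the identity map on trees. *)

From HB Require Import structures.
From mathcomp Require Import all_boot all_order all_algebra.
From mathcomp Require Import finmap.
From mathcomp Require Import boolp classical_sets reals constructive_ereal ereal esum.
From mathcomp Require Import complex.

Set Implicit Arguments.
Unset Strict Implicit.
Unset Printing Implicit Defensive.

Import Order.TTheory GRing.Theory Num.Theory.
Local Open Scope ring_scope.
Local Open Scope fset_scope.
Local Open Scope fmap_scope.

(* Types are the elements of 'I_K (standing for [K] = {1,...,K}).      *)
(* Words of U are seq nat; the children of u are u1, u2, ... (rcons    *)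
(* u i with i >= 1, as in the paper's Ulam-Harris convention).          *)
(* A K-typed tree / forest is a finite map  word -> type, whose domain *)
(* is the vertex set and whose values are the types e(u).              *)

Definition labeled (K : nat) := {fmap seq nat -> 'I_K}.

Definition strict_prefix (u v : seq nat) := prefix u v && (u != v).

Definition is_tree (D : {fset seq nat}) : bool :=
  ([::] \in D) &&
  all (fun w => if w is _ :: _ then
                  let u := take (size w).-1 w in let i := last 0%N w in
                  [&& (0 < i)%N, u \in D & all (fun j => rcons u j \in D) (iota 1 i)]
                else true) (enum_fset D).

(* a forest with r components: every word is k u with 1 <= k <= r      *)
(* (the components themselves being trees is enforced by the laws)     *)
Definition is_forest (r : nat) (D : {fset seq nat}) : bool :=
  all (fun w => (0 < head 0%N w <= r)%N) (enum_fset D).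

Definition nchildren K (t : labeled K) (u : seq nat) : nat :=
  count (fun w => (size w == (size u).+1) && prefix u w) (enum_fset (domf t)).

Definition child_types K (t : labeled K) (u : seq nat) : seq 'I_K :=
  pmap (fun j => t.[? rcons u j]) (iota 1 (nchildren t u)).

Definition mkfmap K (s : seq (seq nat * 'I_K)) : labeled K :=
  foldr (fun kv m => m.[kv.1 <- kv.2]) [fmap] s.

Definition fringe K (f : labeled K) (u : seq nat) : labeled K :=
  mkfmap [seq (drop (size u) (val x), f x) | x <- enum (@predT (domf f)) & prefix u (val x)].

Definition prune K (f : labeled K) (u : seq nat) : labeled K :=
  f.[\ [fset w in domf f | strict_prefix u w]].

Section Laws.
Variables (R : realType) (K : nat).
Variable zeta : 'I_K -> seq 'I_K -> R.
Variable b : 'I_K -> R.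

Definition gw (i : 'I_K) (t : labeled K) : R :=
  if is_tree (domf t) && (t.[? [::]] == Some i)
  then \prod_(u : domf t) zeta (t u) (child_types t (val u))
  else 0.

Definition gwF (x : seq 'I_K) (f : labeled K) : R :=
  if is_forest (size x) (domf f)
  then \prod_(p <- zip (iota 1 (size x)) x) gw p.2 (fringe f [:: p.1])
  else 0.

Definition pdotb (w : seq 'I_K) : R := \sum_(y <- w) b y.

Definition hatzeta (i : 'I_K) (w : seq 'I_K) : R := pdotb w / b i * zeta i w.

(* hat P^(i),h ( ([tree]_{V_h}, V_h) = (t, v) ):                        *)
(* spine vertices u (strict ancestors of v) reproduce by hat zeta and    *)
(* choose the next spine vertex u l with prob. b_{w_l}/(p(w).b);         *)
(* other vertices (except the leaf v = V_h, whose subtree is pruned)     *)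
(* reproduce by zeta.                                                    *)
Definition hatP (i : 'I_K) (h : nat) (t : labeled K) (v : seq nat) : R :=
  if [&& is_tree (domf t), t.[? [::]] == Some i, v \in domf t, size v == h &
         all (fun w => ~~ strict_prefix v w) (enum_fset (domf t))]
  then \prod_(u : domf t | val u != v)
         (let w := child_types t (val u) in
          if strict_prefix (val u) v then
            hatzeta (t u) w *
            (match t.[? rcons (val u) (nth 0%N v (size (val u)))] with
             | Some e => b e | None => 0 end / pdotb w)
          else zeta (t u) w)
  else 0.

Definition hatPF (x : seq 'I_K) (j h : nat) (fv : labeled K * seq nat) : R :=
  let: (f, v) := fv in
  if is_forest (size x) (domf f) && (head 0%N v == j) && (v != [::])
  then \prod_(p <- zip (iota 1 (size x)) x)
         (if p.1 == j then hatP p.2 h (fringe f [:: j]) (behead v)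
          else gw p.2 (fringe f [:: p.1]))
  else 0.

Local Open Scope ereal_scope.

Definition Egw (i : 'I_K) (g : labeled K -> \bar R) : \bar R :=
  \esum_(t in [set: labeled K]) (gw i t)%:E * g t.

Definition EgwF (x : seq 'I_K) (g : labeled K -> \bar R) : \bar R :=
  \esum_(f in [set: labeled K]) (gwF x f)%:E * g f.

Definition EhatF (x : seq 'I_K) (j h : nat) (g : seq nat -> labeled K -> \bar R) : \bar R :=
  \esum_(fv in [set: labeled K * seq nat]) (hatPF x j h fv)%:E * g fv.2 fv.1.

Definition mean_entry (i j : 'I_K) : \bar R :=
  \esum_(w in [set: seq 'I_K]) (zeta i w * (count_mem j w)%:R)%:E.

Definition Qentry (i j k : 'I_K) : \bar R :=
  \esum_(w in [set: seq 'I_K])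
     (zeta i w * ((count_mem j w * count_mem k w)%:R
                  - (j == k)%:R * (count_mem j w)%:R))%:E.

End Laws.

Definition mean_matrix (R : realType) K (zeta : 'I_K -> seq 'I_K -> R) : 'M[R]_K :=
  \matrix_(i, j) fine (mean_entry zeta i j).

Definition irreducible_mx (R : realType) K (M : 'M[R]_K) : Prop :=
  forall i j : 'I_K, exists n : nat, 0 < (M ^+ n) i j.

Definition spectral_radius_one (R : realType) K (M : 'M[R]_K) : Prop :=
  let chi := char_poly (map_mx (fun x : R => (x%:C)%C) M) in
  (exists l : R[i], root chi l /\ `|l| = 1) /\
  (forall l : R[i], root chi l -> `|l| <= 1).

Definition hypH (R : realType) K (zeta : 'I_K -> seq 'I_K -> R) : Prop :=
  [/\ (forall i j k, Qentry zeta i j k < +oo)%E,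
      irreducible_mx (mean_matrix zeta),
      (exists i w, 0 < zeta i w /\ size w != 1%N) &
      spectral_radius_one (mean_matrix zeta)].

From HB Require Import structures.
From mathcomp Require Import all_boot all_order all_algebra.
From mathcomp Require Import finmap.
From mathcomp Require Import boolp classical_sets reals constructive_ereal ereal esum.
From mathcomp Require Import complex.
From mathcomp Require Import ring cardinality fsbigop.
Import Order.TTheory GRing.Theory Num.Theory.
Local Open Scope ring_scope.
Local Open Scope fmap_scope.

Set Implicit Arguments.
Unset Strict Implicit.
Unset Printing Implicit Defensive.

(* For a vertex u of type e of a tree T with root type i, T is recovered by grafting
   the fringe T_u at the leaf u of the pruned tree [T]_u, and the Galton-Watson weight
   factorises over vertices: P^(i)(T) is the product of the offspring weights of
   [T]_u minus u, times P^(e)(T_u).  The size-biased weight of ([T]_u, u) has the same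
   factors off the spine; at a spine vertex of type y the bias p(w).b / b_y times the
   choice probability b_next / p(w).b leaves b_next / b_y, and these ratios telescope
   to b_e / b_i.  Hence P^(i)(T) b_e = b_i hatP^(i),|u|([T]_u, u) P^(e)(T_u), and
   likewise for forests, one component at a time.  Finally (F, v) |-> (|v| - 1,
   ([F]_v, v), F_v) is injective, grafting inverts it, and the right-hand summand
   vanishes off its image, so summing the identity over pointed forests gives the
   theorem. *)

Section Words.
Implicit Types (p u w s : seq nat).

Lemma catI u : injective (cat u).
Proof. by move=> s1 s2 /eqP; rewrite eqseq_cat // eqxx => /eqP. Qed.

Lemma prefix_rconsE p u i : prefix p (rcons u i) = (p == rcons u i) || prefix p u.
Proof.
elim: u p => [|a u IH] [|c p] //.
- by rewrite /= orbF eqseq_cons; case: p => [|d p]; rewrite ?andbT ?andbF.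
- by rewrite rcons_cons prefix_cons IH eqseq_cons andb_orr.
Qed.

Lemma drop_prefix_eq u w s : prefix u s -> (drop (size u) s == w) = (s == u ++ w).
Proof.
move=> /prefixP[s' ->]; rewrite drop_size_cat //.
by apply/eqP/eqP => [->|/catI ->].
Qed.

Lemma strict_prefix_take p u :
  strict_prefix p u -> p = take (size p) u /\ (size p < size u)%N.
Proof.
rewrite /strict_prefix => /andP[/prefixP[s ->] ne].
rewrite take_size_cat //; split => //.
rewrite size_cat -[X in (X < _)%N]addn0 ltn_add2l lt0n size_eq0.
by apply: contra ne => /eqP ->; rewrite cats0.
Qed.

Lemma strict_prefix_irr u : strict_prefix u u = false.
Proof. by rewrite /strict_prefix eqxx andbF. Qed.

Lemma strict_prefixs0 u : strict_prefix u [::] = false.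
Proof. by rewrite /strict_prefix prefixs0; case: eqP. Qed.

Lemma strict_prefix_cons j u w : strict_prefix (j :: u) (j :: w) = strict_prefix u w.
Proof. by rewrite /strict_prefix prefix_cons eqxx eqseq_cons eqxx. Qed.

Lemma strict_prefix_catl u w w' : strict_prefix (u ++ w) (u ++ w') = strict_prefix w w'.
Proof. by rewrite /strict_prefix prefix_catr // eqseq_cat // eqxx. Qed.

Lemma strict_prefix_rcons u w i : strict_prefix u (rcons w i) = prefix u w.
Proof.
rewrite /strict_prefix prefix_rconsE.
have [->|ne] := eqVneq u (rcons w i); last by rewrite andbT.
by apply/esym/negbTE/negP => /size_prefix; rewrite size_rcons ltnn.
Qed.

Lemma strict_prefix_takeF u n : strict_prefix u (take n u) = false.
Proof.
apply/negP => /strict_prefix_take[_].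
by rewrite ltnNge size_prefix ?prefix_take.
Qed.

Lemma strict_prefix_take_lt u k : (k < size u)%N -> strict_prefix (take k u) u.
Proof.
move=> ku; rewrite /strict_prefix prefix_take; apply/eqP => /(congr1 size).
by rewrite size_takel ?(ltnW ku) // => eku; move: ku; rewrite eku ltnn.
Qed.

Lemma rcons_nth_take w u :
  strict_prefix w u -> rcons w (nth 0%N u (size w)) = take (size w).+1 u.
Proof. by move=> /strict_prefix_take[E lt]; rewrite (take_nth 0%N) // -E. Qed.

End Words.

Section Lookups.
Variable K : nat.
Implicit Types (f t : labeled K).

Lemma mem_domf_fnd f w : (w \in domf f) = (f.[? w] != None).
Proof. by case: fndP. Qed.

Lemma fnd_mkfmap (s : seq (seq nat * 'I_K)) k :
  (mkfmap s).[? k] = ohead [seq kv.2 | kv <- s & kv.1 == k].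
Proof.
elim: s => [|[k0 v0] s IH] /=; first by rewrite fnd_fmap0.
by rewrite fnd_set IH; case: (eqVneq k k0) => [->|ne]; rewrite ?eqxx // eq_sym (negbTE ne).
Qed.

Lemma fnd_mkfmap_map (T : Type) (s : seq T) (g : T -> seq nat) (h : T -> 'I_K) k :
  (mkfmap [seq (g y, h y) | y <- s]).[? k] = ohead [seq h y | y <- s & g y == k].
Proof. by rewrite fnd_mkfmap filter_map -!map_comp. Qed.

Lemma ohead_map_fnd f (s : seq (domf f)) (P : pred (domf f)) k :
  (forall y, (y \in s) && P y = (val y == k)) ->
  ohead [seq f y | y <- s & P y] = f.[? k].
Proof.
move=> sP; case E: [seq y <- s | P y] => [|y s'] /=.
  case: fndP => // kf.
  have : [` kf]%fset \in [seq y <- s | P y] by rewrite mem_filter andbC sP /= eqxx.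
  by rewrite E.
have : y \in [seq y <- s | P y] by rewrite E mem_head.
by rewrite mem_filter andbC sP => /eqP <-; rewrite Some_fnd.
Qed.

Lemma ohead_map_none (T : eqType) (T' : Type) (s : seq T) (P : pred T) (h : T -> T') :
  (forall y, y \in s -> P y = false) -> ohead [seq h y | y <- s & P y] = None.
Proof.
move=> sP; case E: [seq y <- s | P y] => [|y s'] //=.
have : y \in [seq y <- s | P y] by rewrite E mem_head.
by rewrite mem_filter => /andP[+ ys]; rewrite sP.
Qed.

Lemma fnd_fringe f u w : (fringe f u).[? w] = f.[? u ++ w].
Proof.
rewrite /fringe fnd_mkfmap_map; apply: ohead_map_fnd => y /=.
rewrite mem_filter mem_enum andbT; move: (val y) => s.
have [pu|npu] := boolP (prefix u s); first by rewrite drop_prefix_eq.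
by apply/esym/negbTE; apply: contra npu => /eqP ->; exact: prefix_prefix.
Qed.

Lemma fnd_prune f u w :
  (prune f u).[? w] = if strict_prefix u w then None else f.[? w].
Proof.
rewrite /prune fnd_rem !inE; case: fndP => wf /=; rewrite ?wf //=.
by case: strict_prefix.
Qed.

Lemma mem_fringe f u w : (w \in domf (fringe f u)) = (u ++ w \in domf f).
Proof. by rewrite !mem_domf_fnd fnd_fringe. Qed.

Lemma mem_prune f u w :
  (w \in domf (prune f u)) = ~~ strict_prefix u w && (w \in domf f).
Proof. by rewrite !mem_domf_fnd fnd_prune; case: strict_prefix. Qed.

Lemma fnd_prune_fringe f v w :
  f.[? w] = if prefix v w then (fringe f v).[? drop (size v) w] else (prune f v).[? w].
Proof.
rewrite fnd_fringe fnd_prune; have [/prefixP[s ->]|npv] := boolP (prefix v w).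
  by rewrite drop_size_cat.
by rewrite /strict_prefix (negbTE npv).
Qed.

Lemma prune_fringe_inj f1 f2 v :
  prune f1 v = prune f2 v -> fringe f1 v = fringe f2 v -> f1 = f2.
Proof.
move=> eq_prune eq_fringe; apply/fmapP => w.
by rewrite (fnd_prune_fringe f1 v) (fnd_prune_fringe f2 v) eq_prune eq_fringe.
Qed.

(* The inverse of [f |-> ([f]_v, f_v)]: graft [t] at [v] onto [f']. *)
Definition glue (f' : labeled K) (v : seq nat) (t : labeled K) : labeled K :=
  mkfmap ([seq (v ++ val y, t y) | y <- enum (@predT (domf t))] ++
          [seq (val y, f' y) | y <- enum (@predT (domf f')) & ~~ prefix v (val y)]).

Lemma ohead_cat (T : Type) (s1 s2 : seq T) :
  ohead (s1 ++ s2) = if ohead s1 is Some y then Some y else ohead s2.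
Proof. by case: s1. Qed.

Lemma fnd_glue f' v t w :
  (glue f' v t).[? w] = if prefix v w then t.[? drop (size v) w] else f'.[? w].
Proof.
rewrite /glue fnd_mkfmap filter_cat map_cat ohead_cat -!fnd_mkfmap.
rewrite !fnd_mkfmap_map; have [pv|npv] := boolP (prefix v w).
  rewrite (@ohead_map_fnd t _ _ (drop (size v) w)); last first.
    move=> y /=; rewrite mem_enum /=; case/prefixP: (pv) => w' ->.
    by rewrite drop_size_cat //; apply/eqP/eqP => [/catI|->].
  case: (t.[? _]) => //=.
  apply: ohead_map_none => y; rewrite mem_filter => /andP[py _]; apply/negbTE.
  by apply: contra py => /eqP ->.
rewrite ohead_map_none; last first.
  by move=> y _ /=; apply/negbTE; apply: contra npv => /eqP <-; rewrite prefix_prefix.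
apply: ohead_map_fnd => y /=.
rewrite mem_filter mem_enum andbT.
by case: (eqVneq (val y) w) => [->|]; rewrite ?npv ?andbF ?andbT.
Qed.

Lemma fringe_glue f' v t : fringe (glue f' v t) v = t.
Proof. by apply/fmapP => w; rewrite fnd_fringe fnd_glue prefix_prefix drop_size_cat. Qed.

Lemma prune_glue f' v t :
  f'.[? v] = t.[? [::]] -> (forall w, strict_prefix v w -> w \notin domf f') ->
  prune (glue f' v t) v = f'.
Proof.
move=> f'v leaf; apply/fmapP => w; rewrite fnd_prune fnd_glue.
have [svw|nsvw] := boolP (strict_prefix v w); first by rewrite not_fnd ?leaf.
have [pvw|//] := boolP (prefix v w).
have <- : v = w by move: nsvw; rewrite /strict_prefix pvw negbK => /eqP.
by rewrite drop_size f'v.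
Qed.

End Lookups.

Definition tree_ok (D : {fset seq nat}) : Prop :=
  [::] \in D /\ forall u i, rcons u i \in D ->
    [/\ (0 < i)%N, u \in D & forall j, (0 < j <= i)%N -> rcons u j \in D].

Lemma is_treeP D : reflect (tree_ok D) (is_tree D).
Proof.
have take_last u i : take (size (rcons u i)).-1 (rcons u i) = u.
  by rewrite size_rcons /= -cats1 take_size_cat.
apply: (iffP andP) => [[r0 /allP ok]|[r0 ok]]; split=> //.
  move=> u i ui; have := ok _ ui.
  case E: (rcons u i) => [|a w]; first by move/(congr1 size): E; rewrite size_rcons.
  rewrite -E /= take_last last_rcons => /and3P[i0 uD /allP sib].
  by split=> // j /andP[j0 ji]; apply: sib; rewrite mem_iota j0 add1n ltnS.
apply/allP; case/lastP => [|u i] // uiD.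
case E: (rcons u i) => [|a w]; first by move/(congr1 size): E; rewrite size_rcons.
rewrite -E /= take_last last_rcons; have [i0 uD sib] := ok u i uiD.
by rewrite i0 uD; apply/allP => j; rewrite mem_iota add1n ltnS => /sib.
Qed.

Section Trees.
Variable K : nat.
Implicit Types (f t T : labeled K).

Lemma tree_prefix_closed (D : {fset seq nat}) w p :
  tree_ok D -> w \in D -> prefix p w -> p \in D.
Proof.
move=> [r0 ok]; elim/last_ind: w p => [|u i IH] p.
  by move=> _; rewrite prefixs0 => /eqP ->.
move=> uiD; rewrite prefix_rconsE => /orP[/eqP -> //|pu].
by have [_ uD _] := ok _ _ uiD; apply: IH.
Qed.

Lemma prune_tree T u : tree_ok (domf T) -> tree_ok (domf (prune T u)).
Proof.
move=> [r0 ok]; split; first by rewrite mem_prune strict_prefixs0.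
move=> w i; rewrite mem_prune strict_prefix_rcons => /andP[npu wiD].
have [i0 wD sib] := ok _ _ wiD; split=> //.
  by rewrite mem_prune wD andbT; apply: contra npu => /andP[].
by move=> j /sib jD; rewrite mem_prune strict_prefix_rcons npu.
Qed.

Lemma fringe_tree T u : tree_ok (domf T) -> u \in domf T ->
  tree_ok (domf (fringe T u)).
Proof.
move=> [r0 ok] uD; split; first by rewrite mem_fringe cats0.
move=> w i; rewrite mem_fringe -rcons_cat => /ok[i0 wD sib].
split=> //; first by rewrite mem_fringe.
by move=> j /sib; rewrite mem_fringe -rcons_cat.
Qed.

Lemma prune_fringe_tree T u : tree_ok (domf (prune T u)) -> tree_ok (domf (fringe T u)) ->
  tree_ok (domf T).
Proof.
move=> [r0 okP] [f0 okF].
have sub w : w \in domf (prune T u) -> w \in domf T by rewrite mem_prune => /andP[].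
split; first exact: sub.
move=> w i wiD.
have lift : rcons w i \in domf (prune T u) ->
    [/\ (0 < i)%N, w \in domf T & forall j, (0 < j <= i)%N -> rcons w j \in domf T].
  by move=> /okP[i0 wD sib]; split=> //; [exact: sub|move=> j /sib/sub].
have [/prefixP[y E]|npu] := boolP (prefix u (rcons w i)); last first.
  by apply: lift; rewrite mem_prune wiD andbT; apply: contra npu => /andP[].
case/lastP: y E => [|y' i'] E.
  by apply: lift; rewrite mem_prune wiD andbT E cats0 strict_prefix_irr.
move: (E); rewrite -rcons_cat => /eqP; rewrite eqseq_rcons => /andP[/eqP Ew /eqP Ei].
have : rcons y' i' \in domf (fringe T u) by rewrite mem_fringe -E.
move=> /okF[i0 yD sib]; rewrite Ei Ew; split=> //; first by rewrite -mem_fringe.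
by move=> j /sib; rewrite mem_fringe rcons_cat.
Qed.

Lemma is_tree_prune_fringe T u : u \in domf T ->
  is_tree (domf T) = is_tree (domf (prune T u)) && is_tree (domf (fringe T u)).
Proof.
move=> uT; apply/idP/andP => [/is_treeP okT|[/is_treeP okP /is_treeP okF]].
  by split; apply/is_treeP; [exact: prune_tree|exact: fringe_tree].
by apply/is_treeP; exact: (prune_fringe_tree okP okF).
Qed.

End Trees.

Lemma uniq_eq_count (T : eqType) (P : pred T) (s1 s2 : seq T) :
  uniq s1 -> uniq s2 -> (forall y, P y -> (y \in s1) = (y \in s2)) ->
  count P s1 = count P s2.
Proof.
move=> u1 u2 s12; rewrite -!size_filter; apply: perm_size.
apply: uniq_perm; rewrite ?filter_uniq // => y; rewrite !mem_filter.
by case Py: (P y) => //=; apply: s12.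
Qed.

Lemma child_word (w y : seq nat) :
  (size y == (size w).+1) && prefix w y -> exists j, y = rcons w j.
Proof.
move=> /andP[/eqP sz /prefixP[s E]]; move: sz; rewrite E size_cat -addn1.
move/eqP; rewrite eqn_add2l.
by case: s E => [|j [|? ?]] E //= _; exists j; rewrite cats1.
Qed.

Section ChildTypes.
Variable K : nat.
Implicit Types (T : labeled K).

Lemma child_types_prune T u w :
  ~~ prefix u w -> child_types (prune T u) w = child_types T w.
Proof.
move=> npu; rewrite /child_types.
have -> : nchildren (prune T u) w = nchildren T w.
  apply: uniq_eq_count; rewrite ?fset_uniq // => y /child_word[j ->].
  by rewrite -[_ \in enum_fset _]/(_ \in domf _) mem_prune strict_prefix_rcons (negbTE npu).
by apply: eq_pmap => j; rewrite fnd_prune strict_prefix_rcons (negbTE npu).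
Qed.

Lemma child_types_fringe T u w : child_types (fringe T u) w = child_types T (u ++ w).
Proof.
rewrite /child_types.
have -> : nchildren (fringe T u) w = nchildren T (u ++ w).
  rewrite /nchildren.
  set P := fun y : seq nat => (size y == (size (u ++ w)).+1) && prefix (u ++ w) y.
  transitivity (count P (map (cat u) (enum_fset (domf (fringe T u))))).
    rewrite count_map; apply: eq_count => y /=.
    by rewrite /P !size_cat -addnS eqn_add2l prefix_catr // eqxx.
  apply: uniq_eq_count; rewrite ?fset_uniq ?(map_inj_uniq (@catI u)) ?fset_uniq //.
  move=> y /andP[_ /catl_prefix /prefixP[y' ->]].
  rewrite (mem_map (@catI u)) -[_ \in enum_fset _]/(_ \in domf _).
  by rewrite -[_ \in enum_fset (domf T)]/(_ \in domf T) mem_fringe.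
by apply: eq_pmap => j; rewrite fnd_fringe rcons_cat.
Qed.

End ChildTypes.

Section Enumeration.
Variable T : eqType.

Lemma zip_iota_mem (x : seq T) e j :
  (0 < j <= size x)%N -> (j, nth e x j.-1) \in zip (iota 1 (size x)) x.
Proof.
move=> /andP[j0 jx]; have jx' : (j.-1 < size x)%N by rewrite prednK.
rewrite (_ : (j, _) = nth (0%N, e) (zip (iota 1 (size x)) x) j.-1).
  by apply: mem_nth; rewrite size_zip size_iota minnn.
by rewrite nth_zip ?size_iota // nth_iota // add1n prednK.
Qed.

Lemma zip_iota_uniq (x : seq T) : uniq (zip (iota 1 (size x)) x).
Proof.
apply: (@map_uniq _ _ fst).
by rewrite -/(unzip1 _) unzip1_zip ?size_iota // iota_uniq.
Qed.

Lemma zip_iota_pair (x : seq T) e p :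
  p \in zip (iota 1 (size x)) x -> p = (p.1, nth e x p.1.-1).
Proof.
move=> px; case: (nthP (0%N, e) px) => i; rewrite size_zip size_iota minnn => ix <-.
by rewrite nth_zip ?size_iota // nth_iota //= add1n.
Qed.

Lemma bigD1_zip_iota (V : Type) (idx : V) (op : Monoid.com_law idx)
    (x : seq T) e j (F : nat * T -> V) :
  (0 < j <= size x)%N ->
  \big[op/idx]_(p <- zip (iota 1 (size x)) x) F p =
  op (F (j, nth e x j.-1)) (\big[op/idx]_(p <- zip (iota 1 (size x)) x | p.1 != j) F p).
Proof.
move=> jx; rewrite (bigD1_seq _ (zip_iota_mem e jx) (zip_iota_uniq x)); congr (op _ _).
rewrite big_seq_cond [RHS]big_seq_cond; apply: eq_bigl => p.
have [px|] := boolP (p \in _) => //=.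
rewrite [in LHS](zip_iota_pair e px); have [->|pj] := eqVneq p.1 j; first by rewrite eqxx.
by rewrite xpair_eqE (negbTE pj).
Qed.

End Enumeration.

Section Decomposition.
Variable K : nat.
Implicit Types (f T : labeled K).

Lemma fringe_cat f u w : fringe (fringe f u) w = fringe f (u ++ w).
Proof. by apply/fmapP => w'; rewrite !fnd_fringe catA. Qed.

Lemma fringe_prune_cat f u w : fringe (prune f (u ++ w)) u = prune (fringe f u) w.
Proof.
by apply/fmapP => w'; rewrite fnd_fringe !fnd_prune fnd_fringe strict_prefix_catl.
Qed.

Lemma fringe_prune_disjoint f j v k : k != j ->
  fringe (prune f (j :: v)) [:: k] = fringe f [:: k].
Proof.
move=> kj; apply/fmapP => w; rewrite !fnd_fringe fnd_prune /= /strict_prefix.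
by rewrite prefix_cons eq_sym (negbTE kj).
Qed.

Lemma perm_domf_prune_fringe T u : u \in domf T ->
  perm_eq (enum_fset (domf T))
    ([seq w <- enum_fset (domf (prune T u)) | w != u] ++
     map (cat u) (enum_fset (domf (fringe T u)))).
Proof.
move=> uT; apply: uniq_perm; first exact: fset_uniq.
  rewrite cat_uniq filter_uniq ?fset_uniq ?(map_inj_uniq (@catI u)) ?fset_uniq // andbT.
  apply/hasPn => w /mapP[y _ ->]; rewrite mem_filter.
  rewrite -[_ \in enum_fset _]/(_ \in domf _) mem_prune.
  have [->|yn] := eqVneq y [::]; first by rewrite cats0 eqxx.
  rewrite /strict_prefix prefix_prefix /=.
  have -> : (u != u ++ y) by apply: contra yn => /eqP E; apply/eqP/(@catI u); rewrite cats0 -E.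
  by rewrite andbF.
move=> w; rewrite mem_cat mem_filter -![_ \in enum_fset _]/(_ \in domf _) mem_prune.
have [/prefixP[y ->]|npu] := boolP (prefix u w).
  rewrite (mem_map (@catI u)) -[_ \in enum_fset _]/(_ \in domf _) mem_fringe.
  by apply/idP/idP => [->|/orP[/and3P[_ _ ->]|->]]; rewrite ?orbT.
have -> : strict_prefix u w = false by rewrite /strict_prefix (negbTE npu).
have -> : (w != u) by apply: contra npu => /eqP ->; exact: prefix_refl.
have -> : (w \in map (cat u) (enum_fset (domf (fringe T u)))) = false.
  by apply/negbTE/mapP => -[y _ E]; move: npu; rewrite E prefix_prefix.
by rewrite orbF.
Qed.

Lemma perm_spine T u : tree_ok (domf T) -> u \in domf T ->
  perm_eq [seq w <- enum_fset (domf (prune T u)) | strict_prefix w u]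
          (map (fun k => take k u) (iota 0 (size u))).
Proof.
move=> okT uT; apply: uniq_perm; rewrite ?filter_uniq ?fset_uniq //.
  rewrite map_inj_in_uniq ?iota_uniq // => k k'.
  rewrite !mem_iota !add0n => /andP[_ ku] /andP[_ k'u] /(congr1 size).
  by rewrite !size_takel // ltnW.
move=> w; rewrite mem_filter -[_ \in enum_fset _]/(_ \in domf _) mem_prune.
apply/idP/mapP.
  move=> /and3P[spw _ _]; have [E lt] := strict_prefix_take spw.
  by exists (size w) => //; rewrite mem_iota.
move=> [k]; rewrite mem_iota add0n => /andP[_ ku] ->.
rewrite strict_prefix_take_lt // strict_prefix_takeF.
exact: (tree_prefix_closed okT uT (prefix_take u k)).
Qed.

Lemma is_forest_prune r f v : v \in domf f ->
  is_forest r (domf (prune f v)) = is_forest r (domf f).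
Proof.
move=> vf; rewrite /is_forest; apply/allP/allP => ok w.
  rewrite -![_ \in enum_fset _]/(_ \in domf _) => wf.
  have [svw|nsvw] := boolP (strict_prefix v w); last by apply: ok; rewrite mem_prune nsvw.
  have := ok v; rewrite -![_ \in enum_fset _]/(_ \in domf _) mem_prune strict_prefix_irr vf.
  by move=> /(_ isT); move: svw => /andP[/prefixP[s ->] _]; case: v {vf ok}.
by rewrite -![_ \in enum_fset _]/(_ \in domf _) mem_prune => /andP[_]; exact: ok.
Qed.
End Decomposition.

Arguments hatPF : simpl never.

Section SizeBiasedTree.
Variables (R : realType) (K : nat) (zeta : 'I_K -> seq 'I_K -> R) (b : 'I_K -> R).
Hypothesis b_pos : forall i, 0 < b i.
Implicit Types (f m T : labeled K).

Definition gw_factor m w : R :=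
  if m.[? w] is Some y then zeta y (child_types m w) else 1.

Definition btype m w : R := if m.[? w] is Some y then b y else 0.

Definition hatP_factor m v w : R :=
  if m.[? w] is Some y then
    let c := child_types m w in
    if strict_prefix w v then
      hatzeta zeta b y c * (btype m (rcons w (nth 0%N v (size w))) / pdotb b c)
    else zeta y c
  else 1.

Definition spine_ratio m v w : R :=
  if strict_prefix w v then btype m (rcons w (nth 0%N v (size w))) / btype m w else 1.

Lemma gw_prod m :
  \prod_(y : domf m) zeta (m y) (child_types m (val y)) =
  \prod_(w <- enum_fset (domf m)) gw_factor m w.
Proof. by rewrite big_seq_fsetE /=; apply: eq_bigr => y _; rewrite /gw_factor -Some_fnd. Qed.

Lemma hatP_prod m v :
  \prod_(y : domf m | val y != v)
     (let w := child_types m (val y) in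
      if strict_prefix (val y) v then
        hatzeta zeta b (m y) w *
        (match m.[? rcons (val y) (nth 0%N v (size (val y)))] with
         | Some e => b e | None => 0 end / pdotb b w)
      else zeta (m y) w)
  = \prod_(w <- enum_fset (domf m) | w != v) hatP_factor m v w.
Proof. by rewrite big_seq_fsetE /=; apply: eq_bigr => y _; rewrite /hatP_factor -Some_fnd. Qed.

Lemma btype_gt0 m w : w \in domf m -> 0 < btype m w.
Proof. by rewrite /btype mem_domf_fnd; case: (m.[? w]). Qed.

Lemma pdotb_gt0 m w l :
  tree_ok (domf m) -> rcons w l \in domf m -> 0 < pdotb b (child_types m w).
Proof.
move=> [_ ok] /ok[l0 _ sib].
have w1 : rcons w 1 \in domf m by apply: sib; rewrite l0.
have : (0 < nchildren m w)%N.
  rewrite /nchildren -has_count; apply/hasP; exists (rcons w 1) => //.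
  by rewrite size_rcons eqxx prefix_rcons.
rewrite /child_types; case: (nchildren m w) => // n _ /=.
move: w1; rewrite mem_domf_fnd; case: (m.[? rcons w 1]) => // y _ /=.
rewrite /pdotb big_cons; apply: (lt_le_trans (b_pos y)).
by rewrite lerDl sumr_ge0 // => z _; apply: ltW.
Qed.

Lemma hatP_factor_prune T u w :
  tree_ok (domf T) -> u \in domf T -> w \in domf (prune T u) -> w != u ->
  hatP_factor (prune T u) u w = gw_factor T w * spine_ratio T u w.
Proof.
move=> okT uT; rewrite mem_prune => /andP[nsp wT] wu.
have npu : ~~ prefix u w by apply: contra nsp => pu; rewrite /strict_prefix pu eq_sym.
rewrite /hatP_factor /gw_factor /spine_ratio /btype fnd_prune (negbTE nsp).
rewrite child_types_prune //; move: wT; rewrite mem_domf_fnd.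
case: (T.[? w]) => [y|] // _; have [spw|] := boolP (strict_prefix w u); last by rewrite mulr1.
rewrite fnd_prune rcons_nth_take // strict_prefix_takeF.
have nT : take (size w).+1 u \in domf (prune T u).
  by rewrite mem_prune strict_prefix_takeF (tree_prefix_closed okT uT (prefix_take u _)).
rewrite -rcons_nth_take // in nT.
have := pdotb_gt0 (prune_tree u okT) nT; rewrite child_types_prune // => pd.
rewrite /hatzeta; have by0 := b_pos y.
move: (pdotb b _) pd => p pd; move: (zeta y _) => z.
case: (T.[? _]) => [e0|]; last by rewrite !mul0r !mulr0.
by field; rewrite (gt_eqF pd) (gt_eqF by0).
Qed.

Lemma prod_spine_ratio T u i e :
  tree_ok (domf T) -> T.[? [::]] = Some i -> T.[? u] = Some e ->
  \prod_(w <- enum_fset (domf (prune T u)) | w != u) spine_ratio T u w = b e / b i.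
Proof.
move=> okT Ti Tu; have uT : u \in domf T by rewrite mem_domf_fnd Tu.
transitivity (\prod_(w <- enum_fset (domf (prune T u)) | strict_prefix w u)
                (btype T (rcons w (nth 0%N u (size w))) / btype T w)).
  rewrite big_mkcond [RHS]big_mkcond; apply: eq_bigr => w _ /=.
  by rewrite /spine_ratio; case: (eqVneq w u) => [->|]; rewrite ?strict_prefix_irr.
rewrite -big_filter (perm_big _ (perm_spine okT uT)) big_map.
transitivity (\prod_(0 <= k < size u) (btype T (take k.+1 u) / btype T (take k u))).
  rewrite /index_iota subn0 big_seq [RHS]big_seq; apply: eq_bigr => k.
  rewrite mem_iota add0n => /andP[_ ku].
  have sk : size (take k u) = k by rewrite size_takel // ltnW.
  by rewrite rcons_nth_take ?strict_prefix_take_lt // sk.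
have [/size0nil u0|u_gt0] := posnP (size u).
  move: Tu; rewrite u0 Ti => -[<-].
  by rewrite big_geq // divff // (gt_eqF (b_pos i)).
rewrite telescope_prodf //; last first.
  by move=> k _; apply/lt0r_neq0/btype_gt0/(tree_prefix_closed okT uT (prefix_take u k)).
by rewrite take_size take0 /btype Tu Ti.
Qed.

Lemma gw_prune_fringe T u e i : T.[? u] = Some e ->
  gw zeta i T * b e = b i * hatP zeta b i (size u) (prune T u) u * gw zeta e (fringe T u).
Proof.
move=> Tu; have uT : u \in domf T by rewrite mem_domf_fnd Tu.
have F0 : (fringe T u).[? [::]] = Some e by rewrite fnd_fringe cats0.
have P0 : (prune T u).[? [::]] = T.[? [::]] by rewrite fnd_prune strict_prefixs0.
have uP : u \in domf (prune T u) by rewrite mem_prune strict_prefix_irr.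
have leaf : all (fun w => ~~ strict_prefix u w) (enum_fset (domf (prune T u))).
  by apply/allP => w; rewrite -[_ \in enum_fset _]/(_ \in domf _) mem_prune => /andP[].
rewrite /gw /hatP P0 F0 uP leaf !eqxx !andbT (is_tree_prune_fringe uT).
case trP: (is_tree (domf (prune T u))); case trF: (is_tree (domf (fringe T u)));
  rewrite /= ?(mul0r, mulr0) //.
have okT : tree_ok (domf T) by apply/is_treeP; rewrite (is_tree_prune_fringe uT) trP trF.
have [Ti|] := eqVneq T.[? [::]] (Some i); last by rewrite !(mul0r, mulr0).
rewrite !gw_prod hatP_prod (perm_big _ (perm_domf_prune_fringe uT)) big_cat /=.
rewrite big_filter big_map.
have eF : \prod_(w <- enum_fset (domf (fringe T u))) gw_factor T (u ++ w) =
          \prod_(w <- enum_fset (domf (fringe T u))) gw_factor (fringe T u) w.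
  by apply: eq_bigr => w _; rewrite /gw_factor fnd_fringe child_types_fringe.
have eH : \prod_(w <- enum_fset (domf (prune T u)) | w != u) hatP_factor (prune T u) u w =
          \prod_(w <- enum_fset (domf (prune T u)) | w != u) (gw_factor T w * spine_ratio T u w).
  rewrite big_seq_cond [RHS]big_seq_cond; apply: eq_bigr => w /andP[wP wu].
  exact: hatP_factor_prune.
rewrite eH big_split /= eF (prod_spine_ratio okT Ti Tu).
move: (\prod_(_ <- _ | _) _) (\prod_(_ <- _) _) => P1 P2.
by field; rewrite (gt_eqF (b_pos i)).
Qed.

Definition other_components (x : seq 'I_K) f j : R :=
  \prod_(p <- zip (iota 1 (size x)) x | p.1 != j) gw zeta p.2 (fringe f [:: p.1]).

Lemma gwF_component x f j e :
  is_forest (size x) (domf f) -> (0 < j <= size x)%N ->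
  gwF zeta x f = gw zeta (nth e x j.-1) (fringe f [:: j]) * other_components x f j.
Proof. by move=> hf jx; rewrite /gwF hf (bigD1_zip_iota _ e _ jx). Qed.

Lemma hatPF_component x f j v h e :
  is_forest (size x) (domf f) -> (0 < j <= size x)%N ->
  hatPF zeta b x j h (f, j :: v) =
  hatP zeta b (nth e x j.-1) h (fringe f [:: j]) v * other_components x f j.
Proof.
move=> hf jx; rewrite /hatPF hf eqxx /= (bigD1_zip_iota _ e _ jx) /= eqxx.
by congr (_ * _); apply: eq_bigr => p /negbTE ->.
Qed.

Lemma other_components_prune x f j v :
  other_components x (prune f (j :: v)) j = other_components x f j.
Proof. by apply: eq_bigr => p pj; rewrite fringe_prune_disjoint. Qed.

Lemma gwF_prune_fringe x f v e : f.[? v] = Some e ->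
  gwF zeta x f * b e =
  \sum_(p <- zip (iota 1 (size x)) x)
     b p.2 * hatPF zeta b x p.1 (size v).-1 (prune f v, v) * gw zeta e (fringe f v).
Proof.
move=> fv; have vf : v \in domf f by rewrite mem_domf_fnd fv.
have [hf|nhf] := boolP (is_forest (size x) (domf f)); last first.
  rewrite /gwF (negbTE nhf) mul0r big1 // => p _.
  by rewrite /hatPF is_forest_prune // (negbTE nhf) mulr0 mul0r.
move: vf (allP hf v vf) fv; case: v => [|j v] // vf /= jx fv.
rewrite (bigD1_zip_iota _ e _ jx) /= big1 ?addr0 => [|p pj]; last first.
  by rewrite /hatPF /= eq_sym (negbTE pj) andbF /= mulr0 mul0r.
rewrite (hatPF_component _ _ e) ?is_forest_prune //.
rewrite (fringe_prune_cat f [:: j] v) other_components_prune (gwF_component e hf jx).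
have fjv : (fringe f [:: j]).[? v] = Some e by rewrite fnd_fringe.
rewrite -(fringe_cat f [:: j] v) mulrAC (gw_prune_fringe _ fjv); ring.
Qed.

End SizeBiasedTree.

Section ExtendedSums.
Local Open Scope ereal_scope.
Variables (R : realType) (T : choiceType).
Implicit Types (S : set T) (a : T -> \bar R).

Lemma esum_ge_term S a i : S i -> a i <= \esum_(j in S) a j.
Proof.
move=> Si; apply: esum_ge; exists [set i]%classic; last by rewrite fsbig_set1.
by split; [exact: finite_set1 | move=> j ->].
Qed.

Lemma ge0_mule_esumr S (c : \bar R) a : 0 <= c -> (forall i, 0 <= a i) ->
  (c * \esum_(i in S) a i)%E = \esum_(i in S) c * a i.
Proof.
case: c => [r| |] // r0 a0.
  move: r0; rewrite lee_fin le0r => /orP[/eqP ->|r_gt0].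
    by rewrite mul0e esum1 // => i _; rewrite mul0e.
  rewrite /esum -ereal_sup_pZl //; congr ereal_sup; apply/seteqP; split => y /=.
    by move=> [_ [X HX <-] <-]; exists X => //; rewrite ge0_mule_fsumr.
  by move=> [X HX <-]; exists (\sum_(i \in X) a i); [exists X|rewrite ge0_mule_fsumr].
have [[i Si ai_gt0]|a_le0] := pselect (exists2 i, S i & 0 < a i).
  rewrite gt0_mulye; last exact: lt_le_trans ai_gt0 (esum_ge_term a Si).
  by have := esum_ge_term (fun j => +oo * a j) Si; rewrite /= gt0_mulye // leye_eq => /eqP.
have a_eq0 i : S i -> a i = 0.
  move=> Si; apply/eqP; rewrite eq_le a0 andbT leNgt; apply/negP => ai_gt0.
  by apply: a_le0; exists i.
rewrite esum1 ?mule0; last exact: a_eq0.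
by rewrite esum1 // => i /a_eq0 ->; rewrite mule0.
Qed.

Lemma esum_esum_setT (T' : choiceType) (F : T -> T' -> \bar R) :
  (forall i j, 0 <= F i j) ->
  \esum_(i in [set: T]) \esum_(j in [set: T']) F i j = \esum_(k in [set: T * T']) F k.1 k.2.
Proof.
by move=> F0; rewrite esum_esum //; congr esum; apply/seteqP; split => // -[].
Qed.

End ExtendedSums.

Section ManyToOne.
Variables (R : realType) (K : nat) (zeta : 'I_K -> seq 'I_K -> R) (b : 'I_K -> R).
Hypothesis b_pos : forall i, 0 < b i.
Hypothesis zeta_ge0 : forall i w, 0 <= zeta i w.
Variable x : seq 'I_K.
Variables (G1 : seq nat -> labeled K -> \bar R) (G2 : labeled K -> \bar R).
Hypothesis G1_ge0 : forall v f, (0 <= G1 v f)%E.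
Hypothesis G2_ge0 : forall t, (0 <= G2 t)%E.
Implicit Types (f t : labeled K).

Lemma gw_ge0 i t : 0 <= gw zeta i t.
Proof. by rewrite /gw; case: ifP => _ //; apply: prodr_ge0 => *; exact: zeta_ge0. Qed.

Lemma gwF_ge0 f : 0 <= gwF zeta x f.
Proof. by rewrite /gwF; case: ifP => _ //; apply: prodr_ge0 => *; exact: gw_ge0. Qed.

Lemma pdotb_ge0 w : 0 <= pdotb b w.
Proof. by apply: sumr_ge0 => i _; exact: ltW. Qed.

Lemma hatP_ge0 i h t v : 0 <= hatP zeta b i h t v.
Proof.
rewrite /hatP; case: ifP => _ //; apply: prodr_ge0 => u _ /=.
case: ifP => _; last exact: zeta_ge0.
apply: mulr_ge0; first by apply: mulr_ge0 => //; apply: divr_ge0; [exact: pdotb_ge0|exact: ltW].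
by apply: divr_ge0; [case: (t.[? _]) => // e; exact: ltW|exact: pdotb_ge0].
Qed.

Lemma hatPF_ge0 j h fv : 0 <= hatPF zeta b x j h fv.
Proof.
case: fv => f v; rewrite /hatPF; case: ifP => _ //; apply: prodr_ge0 => p _.
by case: ifP => _; [exact: hatP_ge0|exact: gw_ge0].
Qed.

Lemma gw_neq0_root e t : gw zeta e t != 0 -> t.[? [::]] = Some e.
Proof. by rewrite /gw; case: ifP => [/andP[_ /eqP]|] //; rewrite eqxx. Qed.

Lemma hatPF_neq0_leaf p h f' v : p \in zip (iota 1 (size x)) x ->
  hatPF zeta b x p.1 h (f', v) != 0 ->
  (size v).-1 = h /\ forall w, strict_prefix v w -> w \notin domf f'.
Proof.
move=> px; rewrite /hatPF; case: ifP => [/andP[/andP[_ /eqP hv] vn]|]; last by rewrite eqxx.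
case: v hv vn => [|j v] //= -> _ hprod.
have : hatP zeta b p.2 h (fringe f' [:: p.1]) v != 0.
  apply: contra hprod => /eqP hatP0; rewrite prodf_seq_eq0; apply/hasP; exists p => //.
  by rewrite /= eqxx /= hatP0.
rewrite /hatP; case: ifP => [/and5P[_ _ _ /eqP sz leaf] _|]; last by rewrite eqxx.
split=> // w spw; apply/negP => wf.
have [w' Ew] : exists w', w = p.1 :: w'.
  by move: spw => /andP[/prefixP[s ->] _]; exists (v ++ s).
move: spw wf; rewrite Ew strict_prefix_cons => spw wf.
have : w' \in domf (fringe f' [:: p.1]) by rewrite mem_fringe.
by move=> /(allP leaf); rewrite spw.
Qed.

Local Open Scope ereal_scope.

Definition spine_weight v f : \bar R :=
  if f.[? v] is Some e then G1 v f * Egw zeta e G2 * ((b e)^-1)%:E else 0.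

Lemma spine_weight_ge0 v f : 0 <= spine_weight v f.
Proof.
rewrite /spine_weight; case: (f.[? v]) => // e.
apply: mule_ge0; last by rewrite lee_fin invr_ge0 ltW.
by apply: mule_ge0 => //; apply: esum_ge0 => t _; apply: mule_ge0; rewrite ?lee_fin ?gw_ge0.
Qed.

(* The summand of the right-hand side at height [h], pointed forest [(f', v)] and
   subtree [t] to be grafted at [v]. *)
Definition glued_term (p : nat * 'I_K) (z : nat * ((labeled K * seq nat) * labeled K)) : \bar R :=
  let: (h, ((f', v), t)) := z in
  if f'.[? v] is Some e then
    ((b p.2 * hatPF zeta b x p.1 h (f', v) / b e)%:E * G1 v f') * ((gw zeta e t)%:E * G2 t)
  else 0.

Definition glued_weight z : \bar R := \sum_(p <- zip (iota 1 (size x)) x) glued_term p z.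

Definition cut (fv : labeled K * seq nat) : nat * ((labeled K * seq nat) * labeled K) :=
  ((size fv.2).-1, ((prune fv.1 fv.2, fv.2), fringe fv.1 fv.2)).

Lemma glued_term_ge0 p z : 0 <= glued_term p z.
Proof.
case: z => h [[f' v] t]; rewrite /glued_term; case: (f'.[? v]) => // e.
apply: mule_ge0; (apply: mule_ge0; last by []); rewrite lee_fin ?gw_ge0 //.
apply: divr_ge0; last exact: ltW.
by apply: mulr_ge0; [exact: ltW|exact: hatPF_ge0].
Qed.

Lemma glued_term_esum p h f' v :
  ((b p.2)%:E * ((hatPF zeta b x p.1 h (f', v))%:E * spine_weight v f'))%E =
  \esum_(t in [set: labeled K]) glued_term p (h, ((f', v), t)).
Proof.
rewrite /glued_term /spine_weight; case: (f'.[? v]) => [e|]; last by rewrite !mule0 esum1.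
rewrite -ge0_mule_esumr; first last.
- by move=> t; apply: mule_ge0; rewrite ?lee_fin ?gw_ge0.
- apply: mule_ge0 => //; rewrite lee_fin; apply: divr_ge0; last exact: ltW.
  by apply: mulr_ge0; [exact: ltW|exact: hatPF_ge0].
rewrite /Egw !EFinM !muleA (muleAC _ (esum _ _)) (muleAC _ (G1 v f')).
by [].
Qed.

Lemma cut_inj : injective cut.
Proof.
move=> [f1 v1] [f2 v2] cut12; have eq_v : v1 = v2 := congr1 (fun z => z.2.1.2) cut12.
subst v2; congr pair.
exact: prune_fringe_inj (congr1 (fun z => z.2.1.1) cut12) (congr1 (fun z => z.2.2) cut12).
Qed.

Lemma glued_weight_cut f v : v \in domf f ->
  glued_weight (cut (f, v)) = (gwF zeta x f)%:E * (G1 v (prune f v) * G2 (fringe f v)).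
Proof.
rewrite mem_domf_fnd; case fv: (f.[? v]) => [e|] // _.
rewrite /glued_weight /glued_term /cut /= fnd_prune strict_prefix_irr fv.
under eq_bigr do rewrite muleACA -EFinM mulrAC.
rewrite -ge0_sume_distrl; last first.
  move=> p _; rewrite lee_fin; apply: divr_ge0; last exact: ltW.
  by apply: mulr_ge0; [apply: mulr_ge0; [exact: ltW|exact: hatPF_ge0]|exact: gw_ge0].
by rewrite sumEFin -mulr_suml -(gwF_prune_fringe _ b_pos x fv) mulfK // gt_eqF.
Qed.

Lemma glued_weight_support z : glued_weight z != 0 ->
  exists2 k, k.2 \in domf k.1 & z = cut k.
Proof.
move: z => [h [[f' v] t]] nz.
have [p px tp] : exists2 p, p \in zip (iota 1 (size x)) x & glued_term p (h, ((f', v), t)) != 0.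
  apply: contrapT => all0; move/eqP: nz; apply; apply: big1_seq => p /andP[_ px].
  by have [|tp] := eqVneq (glued_term p (h, ((f', v), t))) 0; last by case: all0; exists p.
move: tp; rewrite /glued_term; case fv: (f'.[? v]) => [e|]; last by rewrite eqxx.
move=> tp; have [hp gt] : hatPF zeta b x p.1 h (f', v) != 0%R /\ gw zeta e t != 0%R.
  by split; apply: contra tp => /eqP ->; rewrite ?(mulr0, mul0r, mul0e, mule0).
have [hv leaf] := hatPF_neq0_leaf px hp.
have t0 := gw_neq0_root gt.
exists (glue f' v t, v); first by rewrite /= mem_domf_fnd fnd_glue prefix_refl drop_size t0.
by rewrite /cut /= (prune_glue (etrans fv (esym t0)) leaf) fringe_glue hv.
Qed.

Lemma lhs_esum :
  EgwF zeta x (fun f => \sum_(v : domf f) (G1 (val v) (prune f (val v)) * G2 (fringe f (val v))))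
  = \esum_(k in ([set: labeled K] `*`` (fun f => [set` domf f]))%classic)
      ((gwF zeta x k.1)%:E * (G1 k.2 (prune k.1 k.2) * G2 (fringe k.1 k.2))).
Proof.
have A0 f v : 0 <= (gwF zeta x f)%:E * (G1 v (prune f v) * G2 (fringe f v)).
  by apply: mule_ge0; [rewrite lee_fin; exact: gwF_ge0 | exact: mule_ge0].
rewrite /EgwF -(@esum_esum _ _ _ setT (fun f => [set` domf f]%classic)
                  (fun f v => (gwF zeta x f)%:E * (G1 v (prune f v) * G2 (fringe f v))));
  last by move=> f v _ _; exact: A0.
apply: eq_esum => f _.
rewrite esum_fset; [|exact: finite_fset|by move=> v _; exact: A0].
rewrite fsbig_finite ?finite_fset // set_fsetK -ge0_sume_distrr; last by move=> v _; exact: mule_ge0.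
by rewrite big_seq_fsetE.
Qed.

Lemma rhs_esum :
  \sum_(p <- zip (iota 1 (size x)) x)
     (b p.2)%:E * (\esum_(h in [set: nat]) EhatF zeta b x p.1 h spine_weight)
  = \esum_(z in [set: nat * ((labeled K * seq nat) * labeled K)]) glued_weight z.
Proof.
rewrite /glued_weight esum_sum; last by move=> z p _ _; exact: glued_term_ge0.
apply: eq_bigr => p _.
have hatPF_weight_ge0 fv : 0 <= (hatPF zeta b x p.1 _ fv)%:E * spine_weight fv.2 fv.1.
  by apply: mule_ge0; [rewrite lee_fin hatPF_ge0|exact: spine_weight_ge0].
transitivity (\esum_(h in [set: nat]) \esum_(fv in [set: labeled K * seq nat])
                \esum_(t in [set: labeled K]) glued_term p (h, (fv, t))).
  rewrite ge0_mule_esumr; [|by rewrite lee_fin ltW|by move=> h; exact: esum_ge0].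
  apply: eq_esum => h _; rewrite /EhatF ge0_mule_esumr ?lee_fin ?ltW //.
  by apply: eq_esum => -[f' v] _; exact: glued_term_esum.
rewrite (eq_esum (b := fun h => \esum_(k in [set: (labeled K * seq nat) * labeled K])
                                  glued_term p (h, (k.1, k.2)))); last first.
  by move=> h _; rewrite esum_esum_setT // => fv t; exact: glued_term_ge0.
rewrite esum_esum_setT; last by move=> h k; exact: glued_term_ge0.
by apply: eq_esum => -[h [fv t]].
Qed.

Lemma esum_pointed_glued :
  \esum_(k in ([set: labeled K] `*`` (fun f => [set` domf f]))%classic)
      ((gwF zeta x k.1)%:E * (G1 k.2 (prune k.1 k.2) * G2 (fringe k.1 k.2)))
  = \esum_(z in [set: nat * ((labeled K * seq nat) * labeled K)]) glued_weight z.
Proof.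
transitivity (\esum_(k in ([set: labeled K] `*`` (fun f => [set` domf f]))%classic) glued_weight (cut k)).
  by apply: eq_esum => -[f v] [_ /= vf]; rewrite glued_weight_cut.
rewrite -(esum_image _ cut glued_weight); last by move=> k1 k2 _ _; exact: cut_inj.
rewrite esum_mkcond; apply: eq_esum => z _.
case: ifPn => // nz; apply/esym/eqP; apply: contraNT nz => /glued_weight_support[k kS ->].
by apply: mem_set; exists k.
Qed.

Lemma many_to_one :
  EgwF zeta x (fun f => \sum_(v : domf f) (G1 (val v) (prune f (val v)) * G2 (fringe f (val v))))
  = \sum_(p <- zip (iota 1 (size x)) x)
      (b p.2)%:E * (\esum_(h in [set: nat]) EhatF zeta b x p.1 h spine_weight).
Proof. by rewrite lhs_esum rhs_esum esum_pointed_glued. Qed.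

End ManyToOne.

Unset Implicit Arguments.
Set Strict Implicit.
Set Printing Implicit Defensive.

Theorem lemma9 (R : realType) (K : nat) (zeta : 'I_K -> seq 'I_K -> R)
  (a b : 'I_K -> R)
  (zeta_ge0 : forall i w, 0 <= zeta i w)
  (zeta_prob : forall i, (\esum_(w in [set: seq 'I_K]) (zeta i w)%:E = 1)%E)
  (HH : hypH zeta)
  (a_left : forall j, \sum_i a i * mean_matrix zeta i j = a j)
  (a_sum : \sum_i a i = 1)
  (b_right : forall i, \sum_j mean_matrix zeta i j * b j = b i)
  (b_pos : forall i, 0 < b i)
  (ab_norm : \sum_i a i * b i = 1)
  (x : seq 'I_K)
  (G1 : seq nat -> labeled K -> \bar R) (G2 : labeled K -> \bar R)
  (G1_ge0 : forall v f, (0 <= G1 v f)%E) (G2_ge0 : forall t, (0 <= G2 t)%E) :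
  EgwF zeta x (fun f => \sum_(v : domf f) (G1 (val v) (prune f (val v)) * G2 (fringe f (val v))))%E
  = (\sum_(p <- zip (iota 1 (size x)) x)
       (b p.2)%:E *
       \esum_(h in [set: nat])
         EhatF zeta b x p.1 h
           (fun v f => match f.[? v] with
                       | Some e => G1 v f * Egw zeta e G2 * ((b e)^-1)%:E
                       | None => 0
                       end))%E.
Proof. exact: many_to_one. Qed.
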